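(* Let $F$ be a forest and $t$ a positive constant. Then there exists a matching $M$ of $F$ such that the threshold assignment $\tau$ defined by $\tau(w)=deg_F(w)$ if $w$ is saturated by $M$ and $\tau(w)=0$ otherwise satisfies $\overline{\tau}\le t$ and $Ldyn_t(F)=dyn_\tau(F)=|M|$.
   Context: A threshold assignment is a function $\tau:V(F)\to\{0,1,2,\dots\}$ with $\tau(v)\le deg_F(v)$ for every $v$; $\overline{\tau}=\sum_v\tau(v)/|V(F)|$. A set $D\subseteq V(F)$ is a $\tau$-dynamo if $V(F)$ can be partitioned into $D_0=D,D_1,\dots,D_k$ such that for each $1\le i\le k$, $D_i$ consists of all vertices not in $D_0\cup\dots\cup D_{i-1}$ having at least $\tau(v)$ neighbors in $D_0\cup\dots\cup D_{i-1}$; $dyn_\tau(F)$ is the minimum size of a $\tau$-dynamo. $Ldyn_t(F)=\max\{dyn_\tau(F):\overline{\tau}\le t\}$. *)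

From HB Require Import structures.
From mathcomp Require Import all_boot all_order all_algebra.
From mathcomp Require Import reals.
Set Implicit Arguments. Unset Strict Implicit. Unset Printing Implicit Defensive.
Import Order.TTheory GRing.Theory Num.Theory.

Section Graphs.
Variable T : finType.
Variable e : rel T.

Definition simple_graph : Prop := symmetric e /\ irreflexive e.

Definition forest : Prop :=
  forall s : seq T, uniq s -> 3 <= size s -> ~~ cycle e s.

Definition nbhd (v : T) : {set T} := [set u | e v u].
Definition deg (v : T) : nat := #|nbhd v|.

Definition is_edge (A : {set T}) : bool :=
  [exists u, exists v, e u v && (A == [set u; v])].

Definition matching (M : {set {set T}}) : bool :=
  [forall A in M, is_edge A] &&
  [forall A in M, forall B in M, (A != B) ==> [disjoint A & B]].

Definition saturated (M : {set {set T}}) (w : T) : bool :=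
  [exists A in M, w \in A].

Definition threshold (tau : T -> nat) : bool := [forall v, tau v <= deg v].

Definition avg_threshold (R : realType) (tau : T -> nat) : R :=
  (\sum_(v : T) tau v)%:R / #|T|%:R.

(* cumulative sets D_0 u ... u D_i of the activation process from D *)
Fixpoint activated (tau : T -> nat) (D : {set T}) (i : nat) : {set T} :=
  match i with
  | 0 => D
  | i'.+1 => let C := activated tau D i' in
             C :|: [set v | (v \notin C) && (tau v <= #|nbhd v :&: C|)]
  end.

(* D is a tau-dynamo: the process D_0 = D, D_1, ... covers V.  The process
   only grows and stabilizes within |V| steps, so k ranges over 0..|V|. *)
Definition dynamo (tau : T -> nat) (D : {set T}) : bool :=
  [exists k : 'I_#|T|.+1, activated tau D k == [set: T]].

(* dyn_tau(F): minimum size of a tau-dynamo (V itself is one) *)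
Definition dyn (tau : T -> nat) : nat :=
  \big[minn/#|T|]_(D : {set T} | dynamo tau D) #|D|.

(* Ldyn_t(F) = max { dyn_tau(F) : tau threshold assignment, avg tau <= t }.
   In a simple graph any threshold assignment has values <= deg v < |V|,
   so it is encoded as a finite function into 'I_|V|. *)
Definition Ldyn (R : realType) (t : R) : nat :=
  \max_(s : {ffun T -> 'I_#|T|} |
          threshold (fun v => nat_of_ord (s v)) &&
          (avg_threshold R (fun v => nat_of_ord (s v)) <= t)%R)
     dyn (fun v => nat_of_ord (s v)).

End Graphs.

From HB Require Import structures.
From mathcomp Require Import all_boot all_order all_algebra.
From mathcomp Require Import reals.
From mathcomp Require Import zify.
Import Order.TTheory GRing.Theory Num.Theory.

(* Let M be a largest matching whose threshold tau_M (full degree on saturated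
   vertices, 0 elsewhere) has average at most t.  Both ends of an edge of M are
   at full threshold, so a tau_M-dynamo meets every edge of M: dyn tau_M >= |M|.
   Conversely, for any threshold tau on a forest, peeling off leaves yields an
   activation order, a set D from which everything activates along that order,
   and a matching M' with |D| <= |M'| whose saturated vertices have total degree
   at most sum tau: a vertex of threshold 0 goes first and lowers the thresholds
   of its neighbours, a leaf v of threshold 1 goes last, and when its neighbour
   u is at full threshold too, u joins D and uv joins M'.  Hence tau_M' is
   admissible and dyn tau <= |D| <= |M'| <= |M|. *)

Set Implicit Arguments.
Unset Strict Implicit.
Unset Printing Implicit Defensive.

Section Dynamos.
Variables (T : finType) (e : rel T).
Hypotheses (esym : symmetric e) (eirr : irreflexive e).
Implicit Types (S D C : {set T}) (M : {set {set T}}) (s : seq T) (tau : T -> nat) (u v w : T).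

Definition deg_in S v := #|nbhd e v :&: S|.

Definition before s v := [set u | index u s < index v s].

Definition matching_threshold M w :=
  if saturated M w then deg e w else 0.

Definition cost M S :=
  \sum_(w in S | saturated M w) deg_in S w.

Lemma deg_in_sum S v : deg_in S v = \sum_(w in S) e v w.
Proof.
rewrite /deg_in -sum1_card [RHS](eq_bigr (fun w => if e v w then 1 else 0)) //.
by rewrite -big_mkcondr; apply: eq_bigl => w; rewrite !inE andbC.
Qed.

Lemma deg_inD1 S v w : v \in S -> deg_in S w = e w v + deg_in (S :\ v) w.
Proof. by move=> vS; rewrite /deg_in (cardsD1 v) setIDA !inE vS andbT. Qed.

Lemma deg_lt_card v : deg e v < #|T|.
Proof.
rewrite /deg -cardsT; apply/proper_card/properP; split; first exact: subsetT.
by exists v; rewrite ?inE ?eirr.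
Qed.

Lemma before_cons s v w : w != v -> before (v :: s) w = v |: before s w.
Proof.
move=> wv; apply/setP => u; rewrite !inE /= (eq_sym v w) (negbTE wv).
by case: eqVneq.
Qed.

Lemma card_nbhd_before_cons s v w : w != v -> v \notin s ->
  e w v + #|nbhd e w :&: before s w| <= #|nbhd e w :&: before (v :: s) w|.
Proof.
move=> wv vs; rewrite before_cons // setIUr.
have vB : v \notin before s w by rewrite inE -leqNgt (memNindex vs) index_size.
case: (boolP (e w v)) => ewv; last by rewrite add0n subset_leq_card // subsetUr.
have -> : nbhd e w :&: [set v] = [set v] by apply/setIidPr; rewrite sub1set inE.
by rewrite cardsU1 inE (negbTE vB) andbF.
Qed.

Lemma before_rcons s v w : w \in s -> before s w \subset before (rcons s v) w.
Proof.
move=> ws; apply/subsetP => u; rewrite !inE -!cats1 !index_cat ws => uw.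
by rewrite (_ : u \in s) // -index_mem (ltn_trans uw) // index_mem.
Qed.

Lemma before_rcons_last s v : v \notin s -> before (rcons s v) v = [set u in s].
Proof.
move=> vs; apply/setP => u; rewrite !inE -!cats1 !index_cat (negbTE vs) /= eqxx addn0.
by case: (boolP (u \in s)) => us; rewrite ?index_mem // ltnNge leq_addr.
Qed.

Lemma deg_in_le_before_last S s v : v \in S -> s =i S :\ v ->
  deg_in S v <= #|nbhd e v :&: before (rcons s v) v|.
Proof.
move=> vS sS; rewrite before_rcons_last; last by rewrite sS !inE eqxx.
apply/subset_leq_card/subsetP => u; rewrite !inE sS !inE => /andP[evu ->].
by rewrite evu andbT; apply: contraTneq evu => ->; rewrite eirr.
Qed.

Lemma activated_homo tau D :
  {homo activated e tau D : i j / i <= j >-> i \subset j}.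
Proof.
by apply: homo_leq => [A|B A C|i]; [exact: subxx|exact: subset_trans|exact: subsetUl].
Qed.

Lemma order_dynamo tau D s : uniq s -> (forall v, v \in s) ->
  (forall v, v \notin D -> tau v <= #|nbhd e v :&: before s v|) -> dynamo e tau D.
Proof.
move=> s_uniq s_full s_order.
have prefix_active i : [set u | index u s < i] \subset activated e tau D i.
  elim: i => [|i IHi]; first by apply/subsetP => u; rewrite inE.
  apply/subsetP => u; rewrite inE ltnS leq_eqVlt => /orP[/eqP ui|ui]; last first.
    by apply: (subsetP (activated_homo _ _ (leqnSn i))); apply: (subsetP IHi); rewrite inE.
  rewrite /= !inE; case: (boolP (u \in activated e tau D i)) => //= uA.
  have uD : u \notin D by apply: contra uA; apply: (subsetP (activated_homo _ _ (leq0n i))).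
  apply: leq_trans (s_order u uD) _; apply/subset_leq_card/setIS.
  by apply: subset_trans IHi; apply/subsetP => w; rewrite !inE ui.
have size_s : size s = #|T| by rewrite -(card_uniqP s_uniq); apply: eq_card.
apply/existsP; exists ord_max; apply/eqP/setP => v; rewrite inE.
by apply: (subsetP (prefix_active _)); rewrite inE /= -size_s index_mem.
Qed.

Lemma card_nbhd_lt_deg C u v : e u v -> v \notin C -> #|nbhd e u :&: C| < deg e u.
Proof.
move=> euv vC; apply/proper_card/properP; split; first exact: subsetIl.
by exists v; rewrite !inE ?euv // (negbTE vC) andbF.
Qed.

Lemma full_edge_inactive tau D u v : e u v -> u \notin D -> v \notin D ->
  tau u = deg e u -> tau v = deg e v ->
  forall i, (u \notin activated e tau D i) && (v \notin activated e tau D i).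
Proof.
move=> euv uD vD tu tv; elim=> [|i /andP[uA vA]] /=; first by rewrite uD vD.
rewrite !inE (negbTE uA) (negbTE vA) tu tv -!ltnNge (card_nbhd_lt_deg euv vA).
by rewrite esym in euv; rewrite (card_nbhd_lt_deg euv uA).
Qed.

Lemma dynamo_full_edge tau D u v : dynamo e tau D -> e u v ->
  tau u = deg e u -> tau v = deg e v -> (u \in D) || (v \in D).
Proof.
move=> /existsP[k /eqP Dk] euv tu tv; apply/negPn/negP; rewrite negb_or => /andP[uD vD].
by have := full_edge_inactive euv uD vD tu tv k; rewrite Dk !inE.
Qed.

Lemma dynamo_setT tau : dynamo e tau setT.
Proof. by apply/existsP; exists ord0. Qed.

Lemma dyn_le tau D : dynamo e tau D -> dyn e tau <= #|D|.
Proof. by move=> dD; have := bigmin_le_cond #|T| (fun D => #|D|) dD; rewrite minEnat. Qed.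

Lemma leq_dyn tau n : (forall D, dynamo e tau D -> n <= #|D|) -> n <= dyn e tau.
Proof.
move=> n_le; rewrite /dyn; elim/big_rec: _ => [|D m dD nm]; last by rewrite leq_min n_le.
by rewrite -cardsT n_le ?dynamo_setT.
Qed.

Lemma eq_activated tau1 tau2 D : tau1 =1 tau2 -> activated e tau1 D =1 activated e tau2 D.
Proof. by move=> eq12; elim=> //= i ->; apply/setP => v; rewrite !inE eq12. Qed.

Lemma eq_dyn tau1 tau2 : tau1 =1 tau2 -> dyn e tau1 = dyn e tau2.
Proof.
by move=> eq12; apply: eq_bigl => D; apply: eq_existsb => k; rewrite (eq_activated _ eq12).
Qed.

Lemma matching0 : matching e set0.
Proof. by apply/andP; split; apply/forall_inP => A; rewrite inE. Qed.

Lemma matching_edge M A : matching e M -> A \in M -> is_edge e A.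
Proof. by move=> /andP[/forall_inP mM _]; apply: mM. Qed.

Lemma matching_disjoint M A B : matching e M -> A \in M -> B \in M -> A != B ->
  [disjoint A & B].
Proof.
by move=> /andP[_ /forall_inP mM] AM BM; move/forall_inP: (mM A AM) => /(_ B BM) /implyP.
Qed.

Lemma saturated0 w : saturated set0 w = false.
Proof. by apply/exists_inP => -[A]; rewrite inE. Qed.

Lemma saturatedU M u v w :
  saturated ([set u; v] |: M) w = [|| w == u, w == v | saturated M w].
Proof.
apply/exists_inP/or3P => [[A]|[/eqP->|/eqP->|/exists_inP[A AM wA]]].
  rewrite !inE => /orP[/eqP-> /set2P[]->|AM wA]; rewrite ?eqxx; [exact: Or31|exact: Or32|].
  by apply: Or33; apply/exists_inP; exists A.
- by exists [set u; v]; rewrite !inE ?eqxx.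
- by exists [set u; v]; rewrite !inE ?eqxx ?orbT.
- by exists A; rewrite // !inE AM orbT.
Qed.

Lemma matchingU M u v : matching e M -> e u v -> ~~ saturated M u -> ~~ saturated M v ->
  matching e ([set u; v] |: M).
Proof.
move=> mM euv su sv; apply/andP; split.
  apply/forall_inP => A; rewrite !inE => /orP[/eqP->|AM]; last exact: matching_edge AM.
  by apply/existsP; exists u; apply/existsP; exists v; rewrite euv eqxx.
have uv_disj B : B \in M -> [disjoint [set u; v] & B].
  move=> BM; rewrite disjoint_subset; apply/subsetP => x /set2P[]->; rewrite inE.
    by apply: contra su => uB; apply/exists_inP; exists B.
  by apply: contra sv => vB; apply/exists_inP; exists B.
apply/forall_inP => A; rewrite !inE => AM; apply/forall_inP => B; rewrite !inE => BM.
case/orP: AM => [/eqP->|AM]; case/orP: BM => [/eqP->|BM]; apply/implyP => AB.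
- by rewrite eqxx in AB.
- exact: uv_disj.
- by rewrite disjoint_sym uv_disj.
- exact: matching_disjoint AM BM AB.
Qed.

Lemma matching_le_dynamo M D : matching e M -> dynamo e (matching_threshold M) D ->
  #|M| <= #|D|.
Proof.
move=> mM dD.
have meetD A : A \in M -> exists2 x, x \in A & x \in D.
  move=> AM; have /existsP[u /existsP[v /andP[euv /eqP defA]]] := matching_edge mM AM.
  have full w : w \in A -> matching_threshold M w = deg e w.
    move=> wA; rewrite /matching_threshold (_ : saturated M w) //.
    by apply/exists_inP; exists A.
  have [uA vA] : u \in A /\ v \in A by rewrite defA !inE !eqxx orbT.
  by case/orP: (dynamo_full_edge dD euv (full u uA) (full v vA)); [exists u|exists v].
pose edge_of x := odflt set0 [pick A in M | x \in A].
have : M \subset edge_of @: D.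
  apply/subsetP => A AM; have [x xA xD] := meetD A AM.
  apply/imsetP; exists x => //; rewrite /edge_of; case: pickP => [B /andP[BM xB]|none] /=.
    apply/eqP; apply: contraT => AB; have := matching_disjoint mM AM BM AB.
    by move/disjointFr => /(_ x xA); rewrite xB.
  by move: (none A); rewrite AM xA.
by move/subset_leq_card/leq_trans; apply; apply: leq_imset_card.
Qed.

Lemma matching_le_dyn M : matching e M -> #|M| <= dyn e (matching_threshold M).
Proof. by move=> mM; apply: leq_dyn => D; apply: matching_le_dynamo. Qed.

Lemma cost_delete M S v : v \in S -> ~~ saturated M v ->
  cost M S = \sum_(w in S :\ v | saturated M w) e w v + cost M (S :\ v).
Proof.
move=> vS vM; rewrite /cost -big_split /=.
rewrite (eq_bigl (fun w => (w \in S :\ v) && saturated M w)) => [|w]; last first.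
  by rewrite !inE; case: eqVneq => // ->; rewrite (negbTE vM) andbF.
by apply: eq_bigr => w _; rewrite (deg_inD1 _ vS).
Qed.

Lemma cost_add_edge M S u v : u \in S -> v \in S -> u != v ->
  ~~ saturated M u -> ~~ saturated M v ->
  cost ([set u; v] |: M) S = deg_in S u + deg_in S v + cost M S.
Proof.
move=> uS vS uv uM vM; rewrite /cost (bigD1 u) ?uS ?saturatedU ?eqxx //=.
rewrite (bigD1 v) /=; last by rewrite vS saturatedU eqxx orbT eq_sym uv.
rewrite addnA; congr (_ + _); apply: eq_bigl => w; rewrite saturatedU.
case: (eqVneq w u) => [->|_]; first by rewrite (negbTE uM) !andbF.
case: (eqVneq w v) => [->|_]; first by rewrite (negbTE vM) !andbF.
by rewrite !andbT.
Qed.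

Lemma sum_saturated_adj_le M S v :
  \sum_(w in S :\ v | saturated M w) e w v <= deg_in S v.
Proof.
rewrite deg_in_sum (eq_bigr (fun w => e v w : nat)) => [|w _]; last by rewrite esym.
by apply: (sub_le_big leqnn (fun m n => leq_addr n m)) => w /andP[]; rewrite inE => /andP[].
Qed.

Lemma leaf_adj S u v w : nbhd e v :&: S = [set u] -> w \in S -> e w v = (w == u).
Proof. by move=> Nv wS; move/setP/(_ w): Nv; rewrite !inE wS andbT esym. Qed.

Lemma mem_cons_setD1 S s v : v \in S -> s =i S :\ v -> v :: s =i S.
Proof. by move=> vS sS w; rewrite inE sS !inE; case: eqVneq => // ->. Qed.

Record certificate S tau s D M : Prop := Certificate {
  cert_uniq : uniq s;
  cert_mem : s =i S;
  cert_card : #|D| <= #|M|;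
  cert_matching : matching e M;
  cert_saturated_in : forall w, saturated M w -> w \in S;
  cert_saturated_pos : forall w, saturated M w -> 0 < tau w;
  cert_cost : cost M S <= \sum_(w in S) tau w;
  cert_order : forall w, w \in S -> w \notin D -> tau w <= #|nbhd e w :&: before s w| }.

Lemma certificate0 tau : certificate set0 tau [::] set0 set0.
Proof.
split=> //; rewrite ?cards0 ?matching0 //; try by move=> w; rewrite ?saturated0 ?inE.
by rewrite /cost big_pred0 // => w; rewrite inE.
Qed.

Lemma cert_notin S tau s D M v : certificate (S :\ v) tau s D M -> v \notin s.
Proof. by case=> _ s_mem *; rewrite s_mem !inE eqxx. Qed.

Lemma cert_unsaturated S tau s D M v : certificate (S :\ v) tau s D M -> ~~ saturated M v.
Proof. by case=> _ _ _ _ satS *; apply/negP => /satS; rewrite !inE eqxx. Qed.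

Lemma certificate_cons S tau v s D M : v \in S -> tau v = 0 ->
  certificate (S :\ v) (fun w => tau w - e w v) s D M -> certificate S tau (v :: s) D M.
Proof.
move=> vS tv0 c; have vs := cert_notin c; have vM := cert_unsaturated c.
case: c => s_uniq s_mem cardD mM satS satP costM order; split=> //.
- by rewrite /= vs.
- exact: mem_cons_setD1.
- by move=> w /satS; rewrite inE => /andP[].
- by move=> w /satP /leq_trans; apply; apply: leq_subr.
- rewrite (cost_delete vS vM) (big_setD1 v vS) /= tv0 add0n.
  apply: leq_trans (leq_add (leqnn _) costM) _.
  rewrite big_mkcondr -big_split /=; apply: leq_sum => w _.
  by case: ifP => [/satP|_]; case: (e w v) => /=; lia.
- move=> w wS wD; case: (eqVneq w v) => [->|wv]; first by rewrite tv0.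
  apply: leq_trans (card_nbhd_before_cons wv vs); rewrite -leq_subLR.
  by apply: order; rewrite // !inE wv.
Qed.

Lemma certificate_rcons S tau v s D M : v \in S -> tau v = deg_in S v ->
  certificate (S :\ v) tau s D M -> certificate S tau (rcons s v) D M.
Proof.
move=> vS tv c; have vs := cert_notin c; have vM := cert_unsaturated c.
case: c => s_uniq s_mem cardD mM satS satP costM order; split=> //.
- by rewrite rcons_uniq vs.
- by move=> w; rewrite mem_rcons; apply: mem_cons_setD1.
- by move=> w /satS; rewrite inE => /andP[].
- rewrite (cost_delete vS vM) (big_setD1 v vS) tv.
  exact: leq_add (sum_saturated_adj_le _ _ _) costM.
- move=> w wS wD; case: (eqVneq w v) => [->|wv]; first by rewrite tv deg_in_le_before_last.
  have wS' : w \in S :\ v by rewrite !inE wv.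
  apply: leq_trans (order w wS' wD) _.
  by apply/subset_leq_card/setIS/before_rcons; rewrite s_mem.
Qed.

Lemma certificate_rcons_edge S tau u v s D M : v \in S -> nbhd e v :&: S = [set u] ->
  tau v = deg_in S v -> tau u = deg_in S u ->
  certificate (S :\ v) (fun w => if w == u then 0 else tau w) s D M ->
  certificate S tau (rcons s v) (u |: D) ([set u; v] |: M).
Proof.
move=> vS Nv tv tu c; have vs := cert_notin c; have vM := cert_unsaturated c.
case: c => s_uniq s_mem cardD mM satS satP costM order.
have [evu uS] : e v u /\ u \in S by apply/andP; have := set11 u; rewrite -Nv !inE.
have uv : u != v by apply: contraTneq evu => ->; rewrite eirr.
have uS' : u \in S :\ v by rewrite !inE uv.
have uM : ~~ saturated M u by apply/negP => /satP; rewrite eqxx.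
have uvM : [set u; v] \notin M.
  by apply: contra uM => uvM; apply/exists_inP; exists [set u; v]; rewrite // !inE eqxx.
have deg_v : deg_in S v = 1 by rewrite /deg_in Nv cards1.
split.
- by rewrite rcons_uniq vs.
- by move=> w; rewrite mem_rcons; apply: mem_cons_setD1.
- by rewrite !cardsU1 uvM leq_add // leq_b1.
- by apply: matchingU => //; rewrite esym.
- by move=> w; rewrite saturatedU => /or3P[/eqP->|/eqP->|/satS]; rewrite // inE => /andP[].
- move=> w; rewrite saturatedU => /or3P[/eqP->|/eqP->|/satP]; last by case: ifP.
    by rewrite tu; apply/card_gt0P; exists v; rewrite !inE esym evu vS.
  by rewrite tv deg_v.
- rewrite cost_add_edge // (cost_delete vS vM) big1 ?add0n => [|w /andP[wS' wM]]; last first.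
    have wu : w != u by apply: contraNneq uM => <-.
    by rewrite (leaf_adj Nv (subsetP (subsetDl _ _) _ wS')) (negbTE wu).
  rewrite (big_setD1 v vS) (big_setD1 u uS') -tu -tv.
  move: costM; rewrite (big_setD1 u uS') /= eqxx add0n (eq_bigr tau) => [|w]; first by lia.
  by rewrite !inE => /andP[/negbTE->].
- move=> w wS; rewrite !inE negb_or => /andP[wu wD].
  case: (eqVneq w v) => [->|wv]; first by rewrite tv deg_in_le_before_last.
  have wS' : w \in S :\ v by rewrite !inE wv.
  have := order w wS' wD; rewrite (negbTE wu) => /leq_trans; apply.
  by apply/subset_leq_card/setIS/before_rcons; rewrite s_mem.
Qed.

Section Forest.
Hypothesis forestF : forest e.

Lemma forest_path_chord y p i : uniq (y :: p) -> path e y p -> 0 < i < size p ->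
  ~~ e (nth y p i) y.
Proof.
move=> yp_uniq yp_path /andP[i_gt0 ip].
have take_path : path e y (take i.+1 p).
  by move: yp_path; rewrite -{1}(cat_take_drop i.+1 p) cat_path => /andP[].
have := forestF (take_uniq i.+2 yp_uniq); rewrite /= size_takel // !ltnS i_gt0.
by rewrite rcons_path take_path (take_nth y ip) last_rcons => /(_ isT).
Qed.

Lemma path_extend S y p : uniq (y :: p) -> path e y p -> 1 < deg_in S y ->
  exists2 z, z \in nbhd e y :&: S & z \notin y :: p.
Proof.
move=> yp_uniq yp_path /card_gt1P[a [b [aN bN ab]]].
have head_only c : c \in nbhd e y :&: S -> c \in y :: p -> c = head y p.
  rewrite !inE => /andP[eyc _] /orP[/eqP cy|cp]; first by rewrite cy eirr in eyc.
  case: (posnP (index c p)) => [c0|c_gt0]; first by rewrite -(nth_index y cp) c0 nth0.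
  have := @forest_path_chord y p (index c p) yp_uniq yp_path.
  by rewrite c_gt0 index_mem cp nth_index // esym eyc => /(_ isT).
case: (boolP (a \in y :: p)) => ap; last by exists a.
case: (boolP (b \in y :: p)) => bp; last by exists b.
by move: ab; rewrite (head_only a aN ap) (head_only b bN bp) eqxx.
Qed.

Lemma forest_leaf S : S != set0 -> exists2 v, v \in S & deg_in S v <= 1.
Proof.
move=> /set0Pn[x xS].
have [/exists_inP[v vS dv]|/exists_inPn high] := boolP [exists v in S, deg_in S v <= 1].
  by exists v.
have long_path n : exists y p,
    [/\ uniq (y :: p), path e y p, {subset y :: p <= S} & size p = n].
  elim: n => [|n [y [p [yp_uniq yp_path ypS sp]]]].
    by exists x, [::]; split=> // z; rewrite inE => /eqP->.
  have y_high : 1 < deg_in S y by rewrite ltnNge high // ypS ?mem_head.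
  have [z zN zp] := path_extend yp_uniq yp_path y_high.
  move: zN; rewrite !inE => /andP[eyz zS].
  exists z, (y :: p); split; rewrite /= ?sp //.
  - by rewrite zp.
  - by rewrite esym eyz.
  - by move=> w; rewrite inE => /orP[/eqP->|/ypS].
have [y [p [yp_uniq _ ypS sp]]] := long_path #|S|.
have : #|y :: p| <= #|S| by apply/subset_leq_card/subsetP.
by rewrite (card_uniqP yp_uniq) /= sp ltnn.
Qed.

Lemma forest_certificate S tau : {in S, forall v, tau v <= deg_in S v} ->
  exists s D M, certificate S tau s D M.
Proof.
have [n] := ubnP #|S|; elim: n S tau => // n IH S tau S_lt tauS.
have [->|S0] := eqVneq S set0; first by exists [::], set0, set0; apply: certificate0.
have [v vS v_leaf] := forest_leaf S0.
have IHv tau' : {in S :\ v, forall w, tau' w <= deg_in (S :\ v) w} ->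
    exists s D M, certificate (S :\ v) tau' s D M.
  by apply: IH; move: S_lt; rewrite (cardsD1 v S) vS.
have S'S w : w \in S :\ v -> w \in S by rewrite inE => /andP[].
have [tv0|tv_gt0] := posnP (tau v).
  have /IHv [s [D [M c]]] : {in S :\ v, forall w, tau w - e w v <= deg_in (S :\ v) w}.
    by move=> w wS'; rewrite leq_subLR -deg_inD1 // tauS // S'S.
  by exists (v :: s), D, M; apply: certificate_cons.
have tv : tau v = deg_in S v by apply: anti_leq; rewrite tauS // (leq_trans v_leaf).
have [u Nv] : exists u, nbhd e v :&: S = [set u].
  by apply/cards1P; rewrite -/(deg_in S v) eqn_leq v_leaf -tv.
have uS : u \in S by have := set11 u; rewrite -Nv inE => /andP[].
have deg_S' w : w \in S :\ v -> deg_in S w = (w == u) + deg_in (S :\ v) w.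
  by move=> wS'; rewrite (deg_inD1 _ vS) (leaf_adj Nv (S'S w wS')).
case: (ltnP (tau u) (deg_in S u)) => [tu_lt|tu_ge].
  have /IHv [s [D [M c]]] : {in S :\ v, forall w, tau w <= deg_in (S :\ v) w}.
    move=> w wS'; case: (eqVneq w u) => [wu|wu].
      by subst w; move: tu_lt; rewrite deg_S' // eqxx /=; lia.
    by have := tauS w (S'S w wS'); rewrite deg_S' // (negbTE wu).
  by exists (rcons s v), D, M; apply: certificate_rcons.
have /IHv [s [D [M c]]] :
    {in S :\ v, forall w, (if w == u then 0 else tau w) <= deg_in (S :\ v) w}.
  move=> w wS'; case: eqVneq => [//|wu].
  by move: (tauS w (S'S w wS')); rewrite deg_S' // (negbTE wu).
exists (rcons s v), (u |: D), ([set u; v] |: M); apply: certificate_rcons_edge => //.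
by apply: anti_leq; rewrite tu_ge tauS.
Qed.

Lemma forest_dyn_le_matching tau : threshold e tau ->
  exists2 M, matching e M &
    \sum_v matching_threshold M v <= \sum_v tau v /\ dyn e tau <= #|M|.
Proof.
move=> /forallP tau_deg.
have /forest_certificate [s [D [M [s_uniq s_mem cardD mM _ _ costM order]]]] :
    {in [set: T], forall v, tau v <= deg_in [set: T] v}.
  by move=> v _; rewrite /deg_in setIT tau_deg.
exists M => //; split.
  have -> : \sum_v tau v = \sum_(v in [set: T]) tau v by apply: eq_bigl => v; rewrite in_setT.
  apply: leq_trans costM; rewrite /cost big_mkcondr.
  by apply/eq_leq/eq_big => [v|v _]; rewrite ?in_setT // /matching_threshold /deg_in setIT.
apply: leq_trans (dyn_le (order_dynamo s_uniq _ _)) cardD.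
  by move=> v; rewrite s_mem in_setT.
by move=> v; apply: order; rewrite in_setT.
Qed.

End Forest.

Lemma threshold_matching_threshold M : threshold e (matching_threshold M).
Proof. by apply/forallP => v; rewrite /matching_threshold; case: ifP. Qed.

Lemma avg_threshold_le (R : realType) tau1 tau2 : \sum_v tau1 v <= \sum_v tau2 v ->
  (avg_threshold R tau1 <= avg_threshold R tau2)%R.
Proof. by move=> le12; rewrite /avg_threshold ler_wpM2r ?invr_ge0 ?ler0n ?ler_nat. Qed.

Lemma dyn_le_Ldyn (R : realType) (t : R) tau : threshold e tau ->
  (avg_threshold R tau <= t)%R -> dyn e tau <= Ldyn e t.
Proof.
move=> /forallP tau_deg avg_t.
have tau_lt v : tau v < #|T| := leq_ltn_trans (tau_deg v) (deg_lt_card v).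
pose g := [ffun v => Ordinal (tau_lt v)].
have gE : (fun v => nat_of_ord (g v)) =1 tau by move=> v; rewrite ffunE.
rewrite -(eq_dyn gE).
apply: (leq_bigmax_cond (F := fun g : {ffun T -> 'I_#|T|} => dyn e (fun v => g v))).
apply/andP; split; first by apply/forallP => v; rewrite gE tau_deg.
by rewrite /avg_threshold (eq_bigr _ (fun v _ => gE v)).
Qed.

End Dynamos.

Theorem proposition6 (R : realType) (T : finType) (e : rel T)
  (Hsimple : simple_graph e) (Hforest : forest e) (t : R) (ht : (0 < t)%R) :
  exists M : {set {set T}},
    matching e M /\
    let tau := fun w => if saturated M w then deg e w else 0 in
    (avg_threshold (T:=T) R tau <= t)%R /\
    Ldyn e t = dyn e tau /\ dyn e tau = #|M|.
Proof.
have [esym eirr] := Hsimple.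
pose feasible M := matching e M && (avg_threshold R (matching_threshold e M) <= t)%R.
have feasible0 : feasible set0.
  rewrite /feasible matching0 /avg_threshold big1 ?mul0r ?ltW // => v _.
  by rewrite /matching_threshold saturated0.
case: (arg_maxnP (fun M : {set {set T}} => #|M|) feasible0) => M /andP[mM avgM] Mmax.
exists M; split=> //; rewrite -/(matching_threshold e M).
have dyn_ge : #|M| <= dyn e (matching_threshold e M) := matching_le_dyn esym mM.
have dyn_le : dyn e (matching_threshold e M) <= Ldyn e t.
  exact: (dyn_le_Ldyn eirr (threshold_matching_threshold e M) avgM).
have Ldyn_le : Ldyn e t <= #|M|.
  apply/bigmax_leqP => f /andP[f_thr f_avg].
  have [M' mM' [sumM' dynM']] := forest_dyn_le_matching esym eirr Hforest f_thr.
  apply: leq_trans dynM' (Mmax M' _).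
  by rewrite /feasible mM' (le_trans _ f_avg) // avg_threshold_le.
split=> //; split; apply/eqP; rewrite eqn_leq.
  by rewrite dyn_le (leq_trans Ldyn_le dyn_ge).
by rewrite dyn_ge (leq_trans dyn_le Ldyn_le).
Qed.
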